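(* The single-machine scheduling problem $1|\text{two chains}|\sum w_jC_j$ can be solved in $O(n)$ time, where $n$ is the number of jobs.
   Context: The problem $1|\text{two chains}|\sum w_jC_j$ is defined as follows. There are $n$ jobs, and job $j$ has processing time $p_j>0$ and weight $w_j\ge 0$. The jobs are partitioned into two chains (linear orders), and within each chain the jobs must be processed in the chain order. A single machine processes one job at a time, without preemption, starting at time $0$. $C_j$ denotes the completion time of job $j$. The goal is to find a feasible sequence of jobs minimizing $\sum_j w_jC_j$. *)

From HB Require Import structures.
From mathcomp Require Import all_boot all_order all_algebra.
From mathcomp Require Import reals.
Set Implicit Arguments. Unset Strict Implicit. Unset Printing Implicit Defensive.
Import Order.TTheory GRing.Theory Num.Theory.
Local Open Scope ring_scope.

(* A job is a pair (p_j, w_j).  The two chains are given as two        *)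
(* sequences A and B (chain order = sequence order).                   *)

Section Sched.
Variable R : realType.
Definition job := (R * R)%type.

Fixpoint interleave (s : seq bool) (A B : seq job) : seq job :=
  match s with
  | [::] => [::]
  | b :: s' =>
      if b then
        match A with [::] => [::] | a :: A' => a :: interleave s' A' B end
      else
        match B with [::] => [::] | c :: B' => c :: interleave s' A B' end
  end.

(* s describes a feasible sequence: every job of both chains is taken
   exactly once, in chain order.  Feasible sequences of the jobs are
   exactly the sequences interleave s A B for such s. *)
Definition feasible_interleaving (A B : seq job) (s : seq bool) : Prop :=
  count id s = size A /\ count negb s = size B.

Definition completion (js : seq job) (t : nat) : R :=
  \sum_(u < t.+1) (nth (0, 0) js u).1.

Definition twct (js : seq job) : R :=
  \sum_(t < size js) (nth (0, 0) js t).2 * completion js t.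

Definition optimal_interleaving (A B : seq job) (s : seq bool) : Prop :=
  feasible_interleaving A B s /\
  forall s', feasible_interleaving A B s' ->
    twct (interleave s A B) <= twct (interleave s' A B).

Definition valid_instance (A B : seq job) : Prop :=
  forall j, j \in A ++ B -> 0 < j.1 /\ 0 <= j.2.
End Sched.

(* Machine model: a real RAM with unit cost per instruction.          *)

Inductive instr : Type :=
| ISet   (d k : nat)
| IAdd   (d a b : nat)
| ISub   (d a b : nat)      (* ir d := ir a - ir b (truncated)  *)
| ILoad  (d a : nat)
| IStore (a s : nat)
| RSet0  (d : nat)
| RSet1  (d : nat)
| RAdd   (d a b : nat)
| RSub   (d a b : nat)
| RMul   (d a b : nat)
| RDiv   (d a b : nat)      (* rr d := rr a / rr b  (x/0 = 0)   *)
| RLoad  (d a : nat)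
| RStore (a s : nat)
| JEqI   (a b l : nat)
| JLeI   (a b l : nat)
| JLeR   (a b l : nat)
| Jmp    (l : nat)
| Halt.

Definition program := seq instr.

Section Machine.
Variable R : realType.

Record state := State {
  pc : nat;
  ir : nat -> nat;  im : nat -> nat;
  rr : nat -> R;    rm : nat -> R }.

Definition upd {T : Type} (f : nat -> T) (i : nat) (v : T) : nat -> T :=
  fun j => if j == i then v else f j.

(* One step; None iff the machine has halted (Halt instruction or pc
   outside the program). *)
Definition step (P : program) (st : state) : option state :=
  let: State p ir im rr rm := st in
  let nx := p.+1 in
  match nth Halt P p with
  | ISet d k     => Some (State nx (upd ir d k) im rr rm)
  | IAdd d a b   => Some (State nx (upd ir d (ir a + ir b)%N) im rr rm)
  | ISub d a b   => Some (State nx (upd ir d (ir a - ir b)%N) im rr rm)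
  | ILoad d a    => Some (State nx (upd ir d (im (ir a))) im rr rm)
  | IStore a s   => Some (State nx ir (upd im (ir a) (ir s)) rr rm)
  | RSet0 d      => Some (State nx ir im (upd rr d 0) rm)
  | RSet1 d      => Some (State nx ir im (upd rr d 1) rm)
  | RAdd d a b   => Some (State nx ir im (upd rr d (rr a + rr b)) rm)
  | RSub d a b   => Some (State nx ir im (upd rr d (rr a - rr b)) rm)
  | RMul d a b   => Some (State nx ir im (upd rr d (rr a * rr b)) rm)
  | RDiv d a b   => Some (State nx ir im (upd rr d (rr a / rr b)) rm)
  | RLoad d a    => Some (State nx ir im (upd rr d (rm (ir a))) rm)
  | RStore a s   => Some (State nx ir im rr (upd rm (ir a) (rr s)))
  | JEqI a b l   => Some (State (if ir a == ir b then l else nx) ir im rr rm)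
  | JLeI a b l   => Some (State (if (ir a <= ir b)%N then l else nx) ir im rr rm)
  | JLeR a b l   => Some (State (if rr a <= rr b then l else nx) ir im rr rm)
  | Jmp l        => Some (State l ir im rr rm)
  | Halt         => None
  end.

Fixpoint run (P : program) (fuel : nat) (st : state) : state :=
  match fuel with
  | 0 => st
  | f.+1 => match step P st with Some st' => run P f st' | None => st end
  end.

Definition halted (P : program) (st : state) : Prop := step P st = None.

(* Input encoding: im 0 = |A|, im 1 = |B|; the real memory holds
   p(a_1), w(a_1), ..., p(a_k), w(a_k), p(b_1), w(b_1), ..., p(b_m), w(b_m)
   in cells 0, 1, 2, ...; everything else (registers, other cells) is 0. *)
Definition init_state (A B : seq (job R)) : state :=
  State 0 (fun _ => 0%N)
        (fun i => if i == 0%N then size A else if i == 1%N then size B else 0%N)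
        (fun _ => 0)
        (fun i => nth 0 (flatten [seq [:: j.1; j.2] | j <- A ++ B]) i).

(* Output decoding: the t-th job of the computed sequence (t < |A|+|B|)
   comes from chain A iff im (2 + t) != 0. *)
Definition output (A B : seq (job R)) (st : state) : seq bool :=
  [seq im st (2 + t)%N != 0%N | t <- iota 0 (size A + size B)].
End Machine.

From Pilot Require Import Defs.
From HB Require Import structures.
From mathcomp Require Import all_boot all_order all_algebra.
From mathcomp Require Import reals.
From mathcomp Require Import ring lra zify.
Set Implicit Arguments. Unset Strict Implicit. Unset Printing Implicit Defensive.
Import Order.TTheory GRing.Theory Num.Theory.
Local Open Scope ring_scope.

(* The cost of an interleaving of the chains A and B is the cost of A plus
   the cost of B plus a cross term that depends only on the profile: for
   each job of A, the number of jobs of B scheduled before it. Split each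
   chain into Sidney's ratio-maximal blocks; this is done in linear time with
   a stack, merging a new block into the top block as long as the top
   block's weight/time ratio does not exceed that of the new one. For a
   block X of A, any nondecreasing profile costs at least as much as keeping
   X in one piece (Abel summation, using that no prefix of X beats its
   ratio), and the best position for X in one piece is right after the
   blocks of B of larger ratio. Merging the two block sequences by
   nonincreasing ratio realises all these optima simultaneously. The
   real-RAM program computes both stacks and then the merge; every job is
   pushed once and every block is merged or emitted once, so it runs in
   O(n). *)

(** * Cost of an interleaving *)

Section Cost.
Variable R : realType.
Local Notation job := (job R).
Implicit Types (A B X Y Z js : seq job).

Definition psum js : R := \sum_(j <- js) j.1.
Definition wsum js : R := \sum_(j <- js) j.2.
Definition rho js : R := wsum js / psum js.

Lemma psum0 : psum [::] = 0. Proof. exact: big_nil. Qed.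
Lemma wsum0 : wsum [::] = 0. Proof. exact: big_nil. Qed.
Lemma psum_cons j js : psum (j :: js) = j.1 + psum js. Proof. exact: big_cons. Qed.
Lemma wsum_cons j js : wsum (j :: js) = j.2 + wsum js. Proof. exact: big_cons. Qed.
Lemma psum_cat X Y : psum (X ++ Y) = psum X + psum Y. Proof. exact: big_cat. Qed.
Lemma wsum_cat X Y : wsum (X ++ Y) = wsum X + wsum Y. Proof. exact: big_cat. Qed.

Fixpoint twct_rec js : R :=
  if js is j :: js' then j.1 * (j.2 + wsum js') + twct_rec js' else 0.

Lemma twctE js : twct js = twct_rec js.
Proof.
elim: js => [|x js IH]; first by rewrite /twct big_ord0.
rewrite /twct /= big_ord_recl /= -IH /twct /completion.
have completionS (i : 'I_(size js)) :
    (nth (0, 0) (x :: js) (bump 0 i)).2 * completion (x :: js) (bump 0 i)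
    = x.1 * (nth (0, 0) js i).2 + (nth (0, 0) js i).2 * completion js i.
  by rewrite /bump /= /completion big_ord_recl mulrDr mulrC.
rewrite (eq_bigr _ (fun i _ => completionS i)) big_split /= -mulr_sumr big_ord1.
have -> : \sum_(i < size js) (nth (0, 0) js i).2 = wsum js.
  by rewrite /wsum (big_nth (0, 0)) big_mkord.
by ring.
Qed.

Lemma wsum_interleave s A B : count id s = size A -> count negb s = size B ->
  wsum (interleave s A B) = wsum A + wsum B.
Proof.
elim: s A B => [|[] s IH] A B /=.
- by case: A => // _; case: B => // _; rewrite wsum0 addr0.
- by case: A => [|a A] //= [HA] HB; rewrite !wsum_cons IH // addrA.
- by case: B => [|b B] //= HA [HB]; rewrite !wsum_cons IH // addrCA.
Qed.

(* [profile s] lists, for each job of chain A, how many jobs of chain B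
   precede it in [interleave s A B]. *)
Fixpoint profile (s : seq bool) : seq nat :=
  match s with
  | [::] => [::]
  | true :: s' => 0%N :: profile s'
  | false :: s' => map S (profile s')
  end.

Lemma size_profile s : size (profile s) = count id s.
Proof. by elim: s => [|[] s IH] //=; rewrite ?size_map IH. Qed.

Lemma sorted_profile s : sorted leq (profile s).
Proof.
elim: s => [|[] s IH] //=; last by rewrite sorted_map.
by case: (profile s) IH => //= h hs ->; rewrite andbT.
Qed.

Lemma profile_nseq_true n s : profile (nseq n true ++ s) = nseq n 0%N ++ profile s.
Proof. by elim: n => //= n ->. Qed.

Lemma profile_nseq_false n s : profile (nseq n false ++ s) = map (addn n) (profile s).
Proof.
elim: n => /= [|n ->]; first by rewrite map_id_in.
by rewrite -map_comp; apply: eq_map => x /=; rewrite addSn.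
Qed.

(* The part of the cost coupling job [a] of chain A with chain B, when the
   first [h] jobs of B precede [a]. *)
Definition pair_cost B (a : job) (h : nat) : R :=
  a.2 * psum (take h B) + a.1 * (wsum B - wsum (take h B)).

Definition cross_cost A B (hs : seq nat) : R :=
  \sum_(x <- zip A hs) pair_cost B x.1 x.2.

Lemma cross_cost_shift A b B hs : size hs = size A ->
  cross_cost A (b :: B) (map S hs) = b.1 * wsum A + cross_cost A B hs.
Proof.
elim: A hs => [|a A IH] [|h hs] //=.
  by move=> _; rewrite /cross_cost !big_nil wsum0 mulr0 addr0.
move=> [Hs]; rewrite /cross_cost /= !big_cons.
rewrite -/(cross_cost A (b :: B) (map S hs)) -/(cross_cost A B hs) IH //.
by rewrite /pair_cost /= !psum_cons !wsum_cons; ring.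
Qed.

Lemma twct_interleave s A B : count id s = size A -> count negb s = size B ->
  twct_rec (interleave s A B) = twct_rec A + twct_rec B + cross_cost A B (profile s).
Proof.
elim: s A B => [|[] s IH] A B /=.
- by case: A => // _; case: B => // _; rewrite /cross_cost big_nil /=; ring.
- case: A => [|a A] //= [HA] HB.
  rewrite wsum_interleave // IH // /cross_cost /= big_cons /pair_cost /=.
  by rewrite take0 psum0 wsum0; ring.
- case: B => [|b B] //= HA [HB].
  by rewrite wsum_interleave // IH // cross_cost_shift ?size_profile //=; ring.
Qed.

End Cost.

(** * Ratio blocks and the exchange lower bound *)

Section AbelSummation.
Variables (R : realDomainType) (T : Type).

Lemma big_zip_fst (X : seq T) (hs : seq nat) (F : T -> R) :
  size X = size hs -> \sum_(x <- zip X hs) F x.1 = \sum_(x <- X) F x.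
Proof.
elim: X hs => [|x X IH] [|h hs] //=; first by rewrite !big_nil.
by move=> [Hs]; rewrite !big_cons IH.
Qed.

Lemma big_zip_nseq (X : seq T) (h : nat) (F : T -> nat -> R) :
  \sum_(x <- zip X (nseq (size X) h)) F x.1 x.2 = \sum_(x <- X) F x h.
Proof. by elim: X => [|x X IH] /=; rewrite ?big_nil // !big_cons IH. Qed.

Lemma abel_lower_bound (X : seq T) (hs : seq nat) (f : T -> R) (g : nat -> R) :
  size X = size hs -> sorted leq hs -> {homo g : a b / (a <= b)%N >-> a <= b} ->
  (forall j, 0 <= \sum_(x <- drop j X) f x) ->
  forall c, (forall h, h \in hs -> c <= g h) ->
  c * \sum_(x <- X) f x <= \sum_(x <- zip X hs) f x.1 * g x.2.
Proof.
elim: X hs => [|x X IH] [|h hs] //=.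
  by move=> _ _ _ _ c _; rewrite !big_nil mulr0.
move=> [Hs] Hsort Hg Hsuf c Hc; rewrite !big_cons.
have Hall : all (leq h) hs by apply: order_path_min => //; exact: leq_trans.
have IHh : g h * \sum_(y <- X) f y <= \sum_(y <- zip X hs) f y.1 * g y.2.
  apply: IH => //; first exact: path_sorted Hsort.
  - by move=> j; apply: (Hsuf j.+1).
  - by move=> h' /(allP Hall); apply: Hg.
have Hsum := Hsuf 0%N; rewrite drop0 big_cons in Hsum.
have Hch : c <= g h by apply: Hc; rewrite inE eqxx.
have : c * (f x + \sum_(y <- X) f y) <= g h * (f x + \sum_(y <- X) f y).
  exact: ler_wpM2r.
nra.
Qed.

End AbelSummation.

Section Blocks.
Variable R : realType.
Local Notation job := (job R).
Implicit Types (A B X Y Z js : seq job).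

Definition ptimes_pos X := {in X, forall j, 0 < j.1}.

Lemma psum_ge0 X : ptimes_pos X -> 0 <= psum X.
Proof. by move=> HX; rewrite /psum big_seq sumr_ge0 // => j /HX /ltW. Qed.

Lemma ptimes_pos_take n X : ptimes_pos X -> ptimes_pos (take n X).
Proof. by move=> H j /mem_take; apply: H. Qed.

Lemma ptimes_pos_drop n X : ptimes_pos X -> ptimes_pos (drop n X).
Proof. by move=> H j /mem_drop; apply: H. Qed.

Lemma ptimes_pos_cat X Y : ptimes_pos (X ++ Y) <-> ptimes_pos X /\ ptimes_pos Y.
Proof.
split; first by move=> H; split=> j Hj; apply: H; rewrite mem_cat Hj ?orbT.
by move=> [H1 H2] j; rewrite mem_cat => /orP [/H1|/H2].
Qed.

Lemma psum_take_le n X : ptimes_pos X -> psum (take n X) <= psum X.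
Proof.
move=> H; rewrite -{2}(cat_take_drop n X) psum_cat lerDl.
exact/psum_ge0/ptimes_pos_drop.
Qed.

Lemma psum_take_mono B a b : ptimes_pos B -> (a <= b)%N ->
  psum (take a B) <= psum (take b B).
Proof.
by move=> HB Hab; rewrite -(take_takel B Hab); apply/psum_take_le/ptimes_pos_take.
Qed.

(* Sidney's rho-maximal initial sets: no prefix of [Y] has a larger ratio
   [rho] than [Y] itself. *)
Definition ratio_block Y := [/\ ptimes_pos Y, 0 < psum Y &
  forall n, psum Y * wsum (take n Y) <= wsum Y * psum (take n Y)].

(* The decrease of the cost when the adjacent blocks [X Z] are reordered
   as [Z X]. *)
Definition swap_gain X Z : R := psum X * wsum Z - wsum X * psum Z.

Lemma swap_gain0 X : swap_gain X [::] = 0.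
Proof. by rewrite /swap_gain psum0 wsum0 !mulr0 subrr. Qed.

Lemma swap_gain_cat X Y Z : swap_gain X (Y ++ Z) = swap_gain X Y + swap_gain X Z.
Proof. by rewrite /swap_gain psum_cat wsum_cat; ring. Qed.

Lemma swap_gain_flatten_ge0 X ys : {in ys, forall Y, 0 <= swap_gain X Y} ->
  0 <= swap_gain X (flatten ys).
Proof.
elim: ys => [|Y ys IH] H /=; first by rewrite swap_gain0.
rewrite swap_gain_cat; apply: addr_ge0; first exact/H/mem_head.
by apply: IH => Z HZ; apply: H; rewrite inE HZ orbT.
Qed.

Lemma swap_gain_take_block X Y n : 0 <= psum X -> ratio_block Y ->
  psum Y * swap_gain X (take n Y) <= psum (take n Y) * swap_gain X Y.
Proof.
move=> HX [_ _ /(_ n)]; rewrite /swap_gain; set t := take n Y => Ht.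
have : 0 <= psum X * (wsum Y * psum t - psum Y * wsum t) by apply: mulr_ge0; lra.
nra.
Qed.

Lemma swap_gain_take_le0 X Y n : 0 <= psum X -> ratio_block Y ->
  swap_gain X Y <= 0 -> swap_gain X (take n Y) <= 0.
Proof.
move=> HX HY Hd; have := swap_gain_take_block n HX HY; case: HY => HpY HPY _.
have := psum_ge0 (ptimes_pos_take (n := n) HpY); nra.
Qed.

Lemma swap_gain_take_le X Y n : 0 <= psum X -> ratio_block Y ->
  0 <= swap_gain X Y -> swap_gain X (take n Y) <= swap_gain X Y.
Proof.
move=> HX HY Hd; have := swap_gain_take_block n HX HY; case: HY => HpY HPY _.
have := psum_ge0 (ptimes_pos_take (n := n) HpY); have := psum_take_le n HpY; nra.
Qed.

Definition threshold ys X j := {in take j ys, forall Y, 0 <= swap_gain X Y} /\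
  {in drop j ys, forall Y, swap_gain X Y <= 0}.

Lemma swap_gain_take_max X ys j h : 0 <= psum X -> {in ys, forall Y, ratio_block Y} ->
  threshold ys X j ->
  swap_gain X (take h (flatten ys)) <= swap_gain X (flatten (take j ys)).
Proof.
move=> HX; elim: ys j h => [|Y ys IH] j h Hok [Ht Hd] /=; first by rewrite lexx.
have HY := Hok Y (mem_head _ _).
have Hok' : {in ys, forall Z, ratio_block Z} by move=> Z HZ; apply: Hok; rewrite inE HZ orbT.
rewrite take_cat; case: j Ht Hd => [|j] Ht Hd /=.
  have HdY : swap_gain X Y <= 0 by apply: Hd; rewrite inE eqxx.
  rewrite swap_gain0; case: ifP => _; first exact: swap_gain_take_le0.
  have H0 : threshold ys X 0.
    by split=> Z; rewrite ?take0 ?drop0 // => HZ; apply: Hd; rewrite inE HZ orbT.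
  by have := IH 0%N (h - size Y)%N Hok' H0; rewrite take0 swap_gain_cat swap_gain0; lra.
have HdY : 0 <= swap_gain X Y by apply: Ht; rewrite inE eqxx.
rewrite swap_gain_cat; case: ifP => _.
  have := swap_gain_take_le h HX HY HdY.
  have : 0 <= swap_gain X (flatten (take j ys)).
    by apply: swap_gain_flatten_ge0 => Z HZ; apply: Ht; rewrite inE HZ orbT.
  lra.
have Hj : threshold ys X j by split=> Z HZ; [apply: Ht; rewrite inE HZ orbT | apply: Hd].
by have := IH j (h - size Y)%N Hok' Hj; rewrite swap_gain_cat; lra.
Qed.

Lemma big_pair_cost B X h : \sum_(x <- X) pair_cost B x h =
  wsum X * psum (take h B) + psum X * (wsum B - wsum (take h B)).
Proof. by rewrite big_split /= -!mulr_suml. Qed.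

Lemma block_abel_ge0 (B X : seq job) (hs : seq nat) : ptimes_pos B -> ratio_block X ->
  size hs = size X -> sorted leq hs ->
  0 <= \sum_(x <- zip X hs) (psum X * x.1.2 - wsum X * x.1.1) * psum (take x.2 B).
Proof.
move=> HB [_ HPX Hpre] Hs Hsort.
rewrite -[leLHS](mul0r (\sum_(x <- X) (psum X * x.2 - wsum X * x.1))).
apply: (abel_lower_bound (f := fun x : job => psum X * x.2 - wsum X * x.1)
                         (g := fun h => psum (take h B))) => //.
- by move=> a b; apply: psum_take_mono.
- move=> j; rewrite sumrB -!mulr_sumr -/(psum _) -/(wsum _).
  have := Hpre j; rewrite -[in psum X](cat_take_drop j X) -[in wsum X](cat_take_drop j X).
  rewrite psum_cat wsum_cat; nra.
- by move=> h _; apply/psum_ge0/ptimes_pos_take.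
Qed.

Lemma pair_cost_block_min (B X : seq job) (hs : seq nat) h0 :
  ptimes_pos B -> ratio_block X -> size hs = size X -> sorted leq hs ->
  (forall h, swap_gain X (take h B) <= swap_gain X (take h0 B)) ->
  \sum_(x <- X) pair_cost B x h0 <= \sum_(x <- zip X hs) pair_cost B x.1 x.2.
Proof.
move=> HB HX Hs Hsort Hmax; have [HpX HPX _] := HX.
(* Split [psum X * pair_cost] into an Abel-summable part and a part
   governed by the swap gain. *)
have splitE x h : psum X * pair_cost B x h =
    (psum X * x.2 - wsum X * x.1) * psum (take h B)
    + x.1 * (psum X * wsum B - swap_gain X (take h B)).
  by rewrite /pair_cost /swap_gain; ring.
rewrite -(ler_pM2l HPX) big_pair_cost [leRHS]mulr_sumr.
under eq_bigr do rewrite splitE.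
rewrite big_split /=.
have := block_abel_ge0 HB HX Hs Hsort.
have : \sum_(x <- zip X hs) x.1.1 * (psum X * wsum B - swap_gain X (take h0 B))
    <= \sum_(x <- zip X hs) x.1.1 * (psum X * wsum B - swap_gain X (take x.2 B)).
  rewrite !big_seq; apply: ler_sum => x Hx; apply: ler_wpM2l.
    apply/ltW/HpX; rewrite -(unzip1_zip (s := X) (t := hs)) ?Hs //.
    exact: map_f.
  by have := Hmax x.2; lra.
rewrite -mulr_suml (big_zip_fst (fun j : job => j.1)) ?Hs //.
rewrite -/(psum X) /swap_gain; nra.
Qed.

Definition blocks_size (ys : seq (seq job)) j := size (flatten (take j ys)).

Lemma take_blocks_size ys j : take (blocks_size ys j) (flatten ys) = flatten (take j ys).
Proof. by rewrite /blocks_size -{2}(cat_take_drop j ys) flatten_cat take_size_cat. Qed.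

Fixpoint thresholds ys (xs : seq (seq job)) (js : seq nat) : Prop :=
  match xs, js with
  | [::], [::] => True
  | X :: xs', j :: js' => threshold ys X j /\ thresholds ys xs' js'
  | _, _ => False
  end.

(* The profile of the schedule placing each block [X] of [xs] right after
   the first [j] blocks of [ys], where [j] is the threshold of [X]. *)
Fixpoint block_profile ys (xs : seq (seq job)) (js : seq nat) : seq nat :=
  match xs, js with
  | X :: xs', j :: js' => nseq (size X) (blocks_size ys j) ++ block_profile ys xs' js'
  | _, _ => [::]
  end.

Lemma ptimes_pos_flatten ys : {in ys, forall Y, ratio_block Y} -> ptimes_pos (flatten ys).
Proof.
elim: ys => [|Y ys IH] H //=; apply/ptimes_pos_cat; split.
  by case: (H Y (mem_head _ _)).
by apply: IH => Z HZ; apply: H; rewrite inE HZ orbT.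
Qed.

Lemma cross_cost_min ys xs (js hs : seq nat) :
  {in ys, forall Y, ratio_block Y} -> {in xs, forall X, ratio_block X} ->
  thresholds ys xs js -> size hs = size (flatten xs) -> sorted leq hs ->
  cross_cost (flatten xs) (flatten ys) (block_profile ys xs js) <=
  cross_cost (flatten xs) (flatten ys) hs.
Proof.
move=> Hys; elim: xs js hs => [|X xs IH] [|j js] hs //= Hxs.
  by move=> _ _ _; rewrite /cross_cost; case: hs => [|h hs]; rewrite /= !big_nil.
move=> [Hthr Hthrs]; rewrite size_cat => Hs Hsort.
have HX := Hxs X (mem_head _ _).
have HsX : size (take (size X) hs) = size X by rewrite size_takel // Hs leq_addr.
rewrite -(cat_take_drop (size X) hs) /cross_cost !zip_cat ?size_nseq // !big_cat /=.
apply: lerD.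
  rewrite big_zip_nseq; apply: pair_cost_block_min => //.
  - exact: ptimes_pos_flatten.
  - exact: take_sorted.
  - move=> h; rewrite take_blocks_size; apply: swap_gain_take_max => //.
    by case: HX => /psum_ge0.
apply: IH => //.
- by move=> Z HZ; apply: Hxs; rewrite inE HZ orbT.
- by rewrite size_drop Hs addKn.
- exact: drop_sorted.
Qed.

Definition ratio_ge : rel (seq job) := fun X Y => rho Y <= rho X.

Lemma ratio_ge_trans : transitive ratio_ge.
Proof. by move=> Y X Z HXY HYZ; apply: le_trans HYZ HXY. Qed.

Lemma rho_leE X Y : 0 < psum X -> 0 < psum Y ->
  (rho X <= rho Y) = (wsum X * psum Y <= wsum Y * psum X).
Proof. by move=> HX HY; rewrite /rho ler_pdivrMr // mulrAC ler_pdivlMr. Qed.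

Lemma swap_gain_ge0 X Y : 0 < psum X -> 0 < psum Y -> rho X <= rho Y ->
  0 <= swap_gain X Y.
Proof. by move=> HX HY; rewrite rho_leE // /swap_gain => H; lra. Qed.

Lemma swap_gain_le0 X Y : 0 < psum X -> 0 < psum Y -> rho Y <= rho X ->
  swap_gain X Y <= 0.
Proof. by move=> HX HY; rewrite rho_leE // /swap_gain => H; lra. Qed.

(* The interleaving [s] lists the blocks of [xs] and of [ys] by nonincreasing
   [rho], breaking ties in favour of [xs]. *)
Inductive ratio_merge : seq (seq job) -> seq (seq job) -> seq bool -> Prop :=
| RatioMerge0 : ratio_merge [::] [::] [::]
| RatioMergeL X xs ys s : (forall Y ys', ys = Y :: ys' -> rho Y <= rho X) ->
    ratio_merge xs ys s -> ratio_merge (X :: xs) ys (nseq (size X) true ++ s)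
| RatioMergeR Y xs ys s : (forall X xs', xs = X :: xs' -> rho X < rho Y) ->
    ratio_merge xs ys s -> ratio_merge xs (Y :: ys) (nseq (size Y) false ++ s).

Lemma ratio_merge_count xs ys s : ratio_merge xs ys s ->
  count id s = size (flatten xs) /\ count negb s = size (flatten ys).
Proof.
elim=> [|X xs' ys' s' _ _ [H1 H2]|Y xs' ys' s' _ _ [H1 H2]] //=;
  by rewrite !count_cat !count_nseq /= ?size_cat H1 H2 ?mul1n ?mul0n.
Qed.

Lemma block_profile_cons Y ys xs (js : seq nat) :
  block_profile (Y :: ys) xs (map S js) = map (addn (size Y)) (block_profile ys xs js).
Proof.
elim: xs js => [|X xs IH] [|j js] //=.
by rewrite map_cat IH map_nseq /blocks_size /= size_cat.
Qed.

Lemma thresholds_cons Y ys xs (js : seq nat) : thresholds ys xs js ->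
  {in xs, forall X, 0 <= swap_gain X Y} -> thresholds (Y :: ys) xs (map S js).
Proof.
elim: xs js => [|X xs IH] [|j js] //= [[H1 H2] H3] H.
split; last by apply: IH => // Z HZ; apply: H; rewrite inE HZ orbT.
split=> //= Z; rewrite inE => /orP [/eqP -> | HZ]; last exact: H1.
exact/H/mem_head.
Qed.

Lemma sorted_ratio_ge_le c ys : sorted ratio_ge ys ->
  (forall Y ys', ys = Y :: ys' -> rho Y <= c) -> {in ys, forall Z, rho Z <= c}.
Proof.
case: ys => [|Y ys] // Hs /(_ Y ys erefl) HY Z; rewrite inE => /orP [/eqP -> //|HZ].
by apply: le_trans HY; move/allP: (order_path_min ratio_ge_trans Hs); apply.
Qed.

Lemma ratio_merge_profile xs ys s : ratio_merge xs ys s ->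
  {in xs, forall X, ratio_block X} -> {in ys, forall Y, ratio_block Y} ->
  sorted ratio_ge xs -> sorted ratio_ge ys ->
  exists js : seq nat, thresholds ys xs js /\ profile s = block_profile ys xs js.
Proof.
elim=> [|X xs' ys' s' HX _ IH|Y xs' ys' s' HY _ IH] Hxs Hys Sx Sy.
- by exists [::].
- have [|js [Hth Hp]] := IH _ Hys (path_sorted Sx) Sy.
    by move=> Z HZ; apply: Hxs; rewrite inE HZ orbT.
  exists (0%N :: js); split; last by rewrite profile_nseq_true Hp /= /blocks_size take0.
  split=> //; split=> Z; rewrite ?take0 ?drop0 // => HZ.
  have [_ HPX _] := Hxs X (mem_head _ _); have [_ HPZ _] := Hys Z HZ.
  exact/swap_gain_le0/(sorted_ratio_ge_le Sy HX).
- have [|js [Hth Hp]] := IH Hxs _ Sx (path_sorted Sy).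
    by move=> Z HZ; apply: Hys; rewrite inE HZ orbT.
  exists (map S js); split; last by rewrite profile_nseq_false Hp block_profile_cons.
  apply: thresholds_cons => // Z HZ.
  have [_ HPY _] := Hys Y (mem_head _ _); have [_ HPZ _] := Hxs Z HZ.
  apply/swap_gain_ge0/(sorted_ratio_ge_le Sx _ HZ) => // X0 xs0 /HY; exact: ltW.
Qed.

Lemma ratio_merge_optimal xs ys s : ratio_merge xs ys s ->
  {in xs, forall X, ratio_block X} -> {in ys, forall Y, ratio_block Y} ->
  sorted ratio_ge xs -> sorted ratio_ge ys ->
  optimal_interleaving (flatten xs) (flatten ys) s.
Proof.
move=> HM Hxs Hys Sx Sy; have [C1 C2] := ratio_merge_count HM.
split=> // s' [D1 D2]; rewrite !twctE !twct_interleave // lerD2l.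
have [js [Hth ->]] := ratio_merge_profile HM Hxs Hys Sx Sy.
by apply: cross_cost_min; rewrite ?size_profile ?sorted_profile.
Qed.

End Blocks.

(** * Sidney decomposition by a stack *)

Section Decomposition.
Variable R : realType.
Local Notation job := (job R).
Implicit Types (A B X Y Z js : seq job).

Definition ratio_lt : rel (seq job) := fun X Y => rho X < rho Y.

Fixpoint push_block Y (st : seq (seq job)) : seq (seq job) :=
  if st is Z :: st' then
    if rho Z <= rho Y then push_block (Z ++ Y) st' else Y :: st
  else [:: Y].

Definition push_job (st : seq (seq job)) (j : job) := push_block [:: j] st.

(* The stack is kept top first, so its blocks appear in chain order after
   reversal. *)
Definition ratio_decomp js := rev (foldl push_job [::] js).

Lemma flatten_push_block Y st : flatten (rev (push_block Y st)) = flatten (rev st) ++ Y.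
Proof.
elim: st Y => [|Z st IH] Y /=; first by rewrite cats0.
case: ifP => _; first by rewrite IH rev_cons flatten_rcons catA.
by rewrite !rev_cons !flatten_rcons.
Qed.

Lemma size_push_block Y st : (size (push_block Y st) <= (size st).+1)%N.
Proof.
elim: st Y => [|Z st IH] Y //=; case: ifP => _ //.
exact: leq_trans (IH _) _.
Qed.

Lemma ratio_block_cat Z Y : ratio_block Z -> ratio_block Y -> rho Z <= rho Y ->
  ratio_block (Z ++ Y).
Proof.
move=> [pZ PZ HZ] [pY PY HY]; rewrite rho_leE // => Hr.
split; [exact/ptimes_pos_cat | by rewrite psum_cat; lra |].
move=> n; rewrite psum_cat wsum_cat take_cat; case: ifP => _.
  have := HZ n; set t := take n Z => Ht.
  have Pt : 0 <= psum t by apply/psum_ge0/ptimes_pos_take.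
  have K1 : 0 <= (psum Z + psum Y) * (wsum Z * psum t - psum Z * wsum t).
    by apply: mulr_ge0; lra.
  have K2 : 0 <= psum t * (wsum Y * psum Z - wsum Z * psum Y) by apply: mulr_ge0; lra.
  have : 0 <= psum Z * ((wsum Z + wsum Y) * psum t - (psum Z + psum Y) * wsum t).
    by nra.
  rewrite pmulr_rge0 //; lra.
have := HY (n - size Z)%N; set u := take (n - size Z) Y => Hu.
rewrite psum_cat wsum_cat.
have Pu : 0 <= psum u by apply/psum_ge0/ptimes_pos_take.
have Pu2 : psum u <= psum Y by apply: psum_take_le.
have K1 : 0 <= (psum Y - psum u) * (wsum Y * psum Z - wsum Z * psum Y).
  by apply: mulr_ge0; lra.
have K2 : 0 <= (psum Y + psum Z) * (wsum Y * psum u - psum Y * wsum u).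
  by apply: mulr_ge0; lra.
have : 0 <= psum Y * ((wsum Z + wsum Y) * (psum Z + psum u)
                      - (psum Z + psum Y) * (wsum Z + wsum u)) by nra.
rewrite pmulr_rge0 //; lra.
Qed.

Lemma push_block_blocks Y st : ratio_block Y -> {in st, forall Z, ratio_block Z} ->
  {in push_block Y st, forall Z, ratio_block Z}.
Proof.
elim: st Y => [|Z st IH] Y HY Hst /=; first by move=> Z; rewrite inE => /eqP ->.
case: ifP => Hr.
  apply: IH; last by move=> Z' HZ'; apply: Hst; rewrite inE HZ' orbT.
  by apply: ratio_block_cat => //; apply/Hst/mem_head.
by move=> Z'; rewrite inE => /orP [/eqP -> //|]; apply: Hst.
Qed.

Lemma sorted_push_block Y st : sorted ratio_lt st -> sorted ratio_lt (push_block Y st).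
Proof.
elim: st Y => [|Z st IH] Y //= Hs; case: ifP => Hr; first exact/IH/path_sorted/Hs.
by rewrite /= Hs andbT /ratio_lt ltNge Hr.
Qed.

Lemma ratio_block1 (j : job) : 0 < j.1 -> ratio_block [:: j].
Proof.
move=> Hj; split; first by move=> x; rewrite inE => /eqP ->.
  by rewrite psum_cons psum0 addr0.
by case=> [|n]; rewrite /= ?psum_cons ?wsum_cons ?psum0 ?wsum0; lra.
Qed.

Lemma foldl_push_job_blocks js st : ptimes_pos js ->
  {in st, forall Z, ratio_block Z} -> sorted ratio_lt st ->
  {in foldl push_job st js, forall Z, ratio_block Z} /\
  sorted ratio_lt (foldl push_job st js).
Proof.
elim: js st => [|j js IH] st Hp Hst Hs //=.
apply: IH; first by move=> x Hx; apply: Hp; rewrite inE Hx orbT.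
  exact/push_block_blocks/Hst/ratio_block1/Hp/mem_head.
exact: sorted_push_block.
Qed.

Lemma flatten_foldl_push_job st js :
  flatten (rev (foldl push_job st js)) = flatten (rev st) ++ js.
Proof.
elim: js st => [|j js IH] st /=; first by rewrite cats0.
by rewrite IH flatten_push_block -catA.
Qed.

Lemma flatten_ratio_decomp js : flatten (ratio_decomp js) = js.
Proof. exact: flatten_foldl_push_job. Qed.

Lemma size_foldl_push_job st js : (size (foldl push_job st js) <= size st + size js)%N.
Proof.
elim: js st => [|j js IH] st /=; first by rewrite addn0.
by apply: leq_trans (IH _) _; rewrite addnS -addSn leq_add2r size_push_block.
Qed.

Lemma ratio_decomp_blocks js : ptimes_pos js ->
  {in ratio_decomp js, forall Z, ratio_block Z} /\ sorted (@ratio_ge R) (ratio_decomp js).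
Proof.
move=> Hp; have [//|//|Hb Hs] := @foldl_push_job_blocks js [::] Hp.
split; first by move=> Z; rewrite mem_rev; apply: Hb.
rewrite /ratio_decomp rev_sorted; apply: sub_sorted Hs => X Y; exact: ltW.
Qed.

Theorem ratio_merge_decomp_optimal A B s : ptimes_pos A -> ptimes_pos B ->
  ratio_merge (ratio_decomp A) (ratio_decomp B) s -> optimal_interleaving A B s.
Proof.
move=> HA HB HM; have [A1 A2] := ratio_decomp_blocks HA; have [B1 B2] := ratio_decomp_blocks HB.
by rewrite -(flatten_ratio_decomp A) -(flatten_ratio_decomp B); apply: ratio_merge_optimal.
Qed.

End Decomposition.

(** * Real-RAM programs *)

Section Machine.
Variable R : realType.
Local Notation job := (job R).
Local Notation state := (state R).
Implicit Types (P : program).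

Definition exec_instr (ins : instr) (st : state) : option state :=
  let: State p ir im rr rm := st in
  let nx := p.+1 in
  match ins with
  | ISet d k     => Some (State nx (upd ir d k) im rr rm)
  | IAdd d a b   => Some (State nx (upd ir d (ir a + ir b)%N) im rr rm)
  | ISub d a b   => Some (State nx (upd ir d (ir a - ir b)%N) im rr rm)
  | ILoad d a    => Some (State nx (upd ir d (im (ir a))) im rr rm)
  | IStore a s   => Some (State nx ir (upd im (ir a) (ir s)) rr rm)
  | RSet0 d      => Some (State nx ir im (upd rr d 0) rm)
  | RSet1 d      => Some (State nx ir im (upd rr d 1) rm)
  | RAdd d a b   => Some (State nx ir im (upd rr d (rr a + rr b)) rm)
  | RSub d a b   => Some (State nx ir im (upd rr d (rr a - rr b)) rm)
  | RMul d a b   => Some (State nx ir im (upd rr d (rr a * rr b)) rm)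
  | RDiv d a b   => Some (State nx ir im (upd rr d (rr a / rr b)) rm)
  | RLoad d a    => Some (State nx ir im (upd rr d (rm (ir a))) rm)
  | RStore a s   => Some (State nx ir im rr (upd rm (ir a) (rr s)))
  | JEqI a b l   => Some (State (if ir a == ir b then l else nx) ir im rr rm)
  | JLeI a b l   => Some (State (if (ir a <= ir b)%N then l else nx) ir im rr rm)
  | JLeR a b l   => Some (State (if rr a <= rr b then l else nx) ir im rr rm)
  | Jmp l        => Some (State l ir im rr rm)
  | Halt         => None
  end.

Lemma stepE P (st : state) : step P st = exec_instr (nth Halt P (pc st)) st.
Proof. by case: st. Qed.

Lemma run_add P a b (st : state) : run P (a + b) st = run P b (run P a st).
Proof.
elim: a st => [|a IH] st //=.
case E: (step P st) => [st'|]; first exact: IH.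
by clear IH; case: b => //= b; rewrite E.
Qed.

Lemma run_halted P n (st : state) : halted P st -> run P n st = st.
Proof. by case: n => //= n; rewrite /halted => ->. Qed.

Definition reach P (st : state) (Q : nat -> state -> Prop) := exists k, Q k (run P k st).

Lemma reach_now P (st : state) (Q : nat -> state -> Prop) : Q 0%N st -> reach P st Q.
Proof. by exists 0%N. Qed.

Lemma reach_step P (st st' : state) (Q : nat -> state -> Prop) :
  step P st = Some st' -> reach P st' (fun k s => Q k.+1 s) -> reach P st Q.
Proof. by move=> E [k Hk]; exists k.+1; rewrite /= E. Qed.

Lemma reach_exec P o i ir im rr rm st' ins (Q : nat -> state -> Prop) :
  nth Halt P (i + o) = ins -> exec_instr ins (State (i + o) ir im rr rm) = Some st' ->
  reach P st' (fun k s => Q k.+1 s) -> reach P (State (i + o) ir im rr rm) Q.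
Proof. by move=> E1 E2; apply: reach_step; rewrite stepE /= E1. Qed.

Lemma reach_seq P (st : state) (Q1 Q : nat -> state -> Prop) : reach P st Q1 ->
  (forall k1 s1, Q1 k1 s1 -> reach P s1 (fun k2 s2 => Q (k1 + k2)%N s2)) ->
  reach P st Q.
Proof.
move=> [k1 H1] H; have [k2 H2] := H _ _ H1.
by exists (k1 + k2)%N; rewrite run_add.
Qed.

Lemma reachW P (st : state) (Q1 Q : nat -> state -> Prop) : reach P st Q1 ->
  (forall k s, Q1 k s -> Q k s) -> reach P st Q.
Proof. by move=> [k H1] H; exists k; apply: H. Qed.

Lemma upd_neq T (f : nat -> T) a v x : x <> a -> upd f a v x = f x.
Proof. by move=> H; rewrite /upd; case: eqP. Qed.

Definition block_at (b : nat) (Y : seq job) (im : nat -> nat) (rm : nat -> R) :=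
  [/\ rm b = psum Y, rm b.+1 = wsum Y & im b = size Y].

Definition blocks_mem (base : nat) (bs : seq (seq job)) (im : nat -> nat) (rm : nat -> R) :=
  forall l, (l < size bs)%N -> block_at (base + 2 * l) (nth [::] bs l) im rm.

Lemma blocks_mem_frame base bs im rm im' rm' : blocks_mem base bs im rm ->
  (forall x, (base <= x < base + 2 * size bs)%N -> rm' x = rm x /\ im' x = im x) ->
  blocks_mem base bs im' rm'.
Proof.
move=> H Fr l Hl; have [A1 A2 A3] := H l Hl.
have [F1 F3] := Fr (base + 2 * l)%N ltac:(lia).
have [F2 _] := Fr (base + 2 * l).+1 ltac:(lia).
by split; rewrite ?F1 ?F2 ?F3.
Qed.

Lemma blocks_mem_rconsP base bs Y im rm :
  blocks_mem base (rcons bs Y) im rm <->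
  blocks_mem base bs im rm /\ block_at (base + 2 * size bs) Y im rm.
Proof.
split=> [H|[H HY] l].
  split; last by have := H (size bs); rewrite size_rcons nth_rcons ltnn eqxx; apply.
  by move=> l Hl; have := H l; rewrite size_rcons nth_rcons Hl; apply; lia.
rewrite size_rcons ltnS leq_eqVlt nth_rcons => /orP [/eqP ->|Hl]; last by rewrite Hl; apply: H.
by rewrite ltnn eqxx.
Qed.

Lemma blocks_mem_pop base st Y im rm : blocks_mem base (rev (Y :: st)) im rm ->
  blocks_mem base (rev st) im rm /\ block_at (base + 2 * size st) Y im rm.
Proof. by rewrite rev_cons => /blocks_mem_rconsP; rewrite size_rev. Qed.

Lemma blocks_mem_push base st Y im rm im' rm' : blocks_mem base (rev st) im rm ->
  block_at (base + 2 * size st) Y im' rm' ->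
  (forall x, (x < base + 2 * size st)%N -> rm' x = rm x /\ im' x = im x) ->
  blocks_mem base (rev (Y :: st)) im' rm'.
Proof.
move=> H HY Fr; rewrite rev_cons; apply/blocks_mem_rconsP; rewrite size_rev.
by split=> //; apply: blocks_mem_frame H _ => x /andP [_]; rewrite size_rev; apply: Fr.
Qed.

Definition input_mem (inp : nat) (js : seq job) (rm0 : nat -> R) :=
  forall i, (i < size js)%N ->
    rm0 (inp + 2 * i)%N = (nth (0, 0) js i).1 /\ rm0 (inp + 2 * i).+1 = (nth (0, 0) js i).2.

Lemma input_mem_behead inp (j : job) js rm0 :
  input_mem inp (j :: js) rm0 -> input_mem (inp + 1 + 1) js rm0.
Proof.
move=> H i Hi; have := H i.+1 Hi.
by have -> : (inp + 2 * i.+1 = inp + 1 + 1 + 2 * i)%N by lia.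
Qed.

End Machine.

Local Open Scope nat_scope.

(** * The scheduling program *)

(* Memory layout, for n = |A| + |B| and base = 2 n + 2: the input occupies
   rm [0, 2 n), the output bits im [2, 2 + n), and the block stacks of A and
   then of B are stored from base on, top block last. Registers 0, 1, 2 hold
   the constants 0, 1, 2 and registers 14, 15, 16, 19 hold |A|, |B|, n and
   base. While a chain is decomposed (by [decomp_code o], placed at offset
   [o]), register 3 reads the input, 4 counts the jobs left, the stack
   occupies [ir 5, ir 6), and [ir 7 = ir 5 + 2] detects a stack with a
   single block. During the merge, 17 is where B's stack starts, 18 and 20
   scan the two stacks, and 21 points to the next output bit. *)
Definition decomp_code (o : nat) : program := [::
 (*0*) JEqI 4 0 (34 + o);
 (*1*) RLoad 0 3;
 (*2*) IAdd 3 3 1;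
 (*3*) RLoad 1 3;
 (*4*) IAdd 3 3 1;
 (*5*) ISub 4 4 1;
 (*6*) RStore 6 0;
 (*7*) IAdd 8 6 1;
 (*8*) RStore 8 1;
 (*9*) IStore 6 1;
 (*10*) IAdd 6 6 2;
 (*11*) JLeI 6 7 (0 + o);
 (*12*) ISub 8 6 2;
 (*13*) ISub 9 8 2;
 (*14*) IAdd 10 8 1;
 (*15*) IAdd 11 9 1;
 (*16*) RLoad 2 8;
 (*17*) RLoad 3 10;
 (*18*) RLoad 4 9;
 (*19*) RLoad 5 11;
 (*20*) RDiv 6 3 2;
 (*21*) RDiv 7 5 4;
 (*22*) JLeR 7 6 (24 + o);
 (*23*) Jmp (0 + o);
 (*24*) RAdd 4 4 2;
 (*25*) RAdd 5 5 3;
 (*26*) RStore 9 4;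
 (*27*) RStore 11 5;
 (*28*) ILoad 12 8;
 (*29*) ILoad 13 9;
 (*30*) IAdd 13 13 12;
 (*31*) IStore 9 13;
 (*32*) ISub 6 6 2;
 (*33*) Jmp (11 + o) ].

Definition prelude_code : program := [::
 (*0*) ISet 1 1; (*1*) ISet 2 2; (*2*) ILoad 14 0; (*3*) ILoad 15 1;
 (*4*) IAdd 16 14 15; (*5*) IAdd 5 16 16; (*6*) IAdd 5 5 2; (*7*) IAdd 6 5 0;
 (*8*) IAdd 7 5 2; (*9*) IAdd 19 5 0; (*10*) IAdd 4 14 0].

Definition switch_code : program := [::
 (*45*) IAdd 17 6 0; (*46*) IAdd 5 6 0; (*47*) IAdd 7 5 2; (*48*) IAdd 4 15 0].

Definition merge_code : program := [::
 (*83*) IAdd 18 19 0;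
 (*84*) IAdd 20 17 0;
 (*85*) ISet 21 2;
 (*86*) JEqI 18 17 98;
 (*87*) JEqI 20 6 100;
 (*88*) IAdd 22 18 1;
 (*89*) RLoad 8 18;
 (*90*) RLoad 9 22;
 (*91*) IAdd 23 20 1;
 (*92*) RLoad 10 20;
 (*93*) RLoad 11 23;
 (*94*) RDiv 12 9 8;
 (*95*) RDiv 13 11 10;
 (*96*) JLeR 13 12 100;
 (*97*) Jmp 108;
 (*98*) JEqI 20 6 112;
 (*99*) Jmp 108;
 (*100*) ILoad 24 18;
 (*101*) JEqI 24 0 106;
 (*102*) IStore 21 1;
 (*103*) IAdd 21 21 1;
 (*104*) ISub 24 24 1;
 (*105*) Jmp 101;
 (*106*) IAdd 18 18 2;
 (*107*) Jmp 86;
 (*108*) ILoad 24 20;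
 (*109*) IAdd 21 21 24;
 (*110*) IAdd 20 20 2;
 (*111*) Jmp 86;
 (*112*) Halt ].

Definition sched_prog : program :=
  prelude_code ++ decomp_code 11 ++ switch_code ++ decomp_code 49 ++ merge_code.

Ltac mstep i := apply: (@reach_exec _ sched_prog 0 i); [reflexivity | reflexivity | ].

Section DecompPhase.
Variable R : realType.
Variables (P : program) (o : nat).
Hypothesis code_at_o : forall i, i < 34 -> nth Halt P (i + o) = nth Halt (decomp_code o) i.

Definition decomp_inv (pc0 : nat) (base iend : nat) (rm0 : nat -> R) (im0 : nat -> nat)
   (irf : nat -> nat) (js : seq (job R)) (st : seq (seq (job R))) (s : state R) :=
  let: State pc ir im rr rm := s in
  [/\ pc = pc0, [/\ ir 0 = 0, ir 1 = 1, ir 2 = 2, ir 5 = base & ir 7 = base + 2],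
      [/\ ir 6 = base + 2 * size st, ir 4 = size js, input_mem (ir 3) js rm0,
         ir 3 + 2 * size js = iend & iend <= base] &
      [/\ forall x, x < base -> rm x = rm0 x /\ im x = im0 x,
          blocks_mem base (rev st) im rm & forall r, 14 <= r -> ir r = irf r]].

Ltac dstep i := apply: (@reach_exec R P o i); [by rewrite code_at_o | reflexivity | ].

Ltac simpif :=
  repeat (first [ rewrite ifN_eq; last by lia | rewrite ifT; last by apply/eqP; lia ]).

(* Weighted by 22, the stack size is a potential paying for the iterations
   that merge the two top blocks. *)
Lemma push_block_run base iend rm0 im0 irf js rest Y (s : state R) :
  decomp_inv (11 + o) base iend rm0 im0 irf js (Y :: rest) s ->
  reach P s (fun k s' => decomp_inv o base iend rm0 im0 irf js (push_block Y rest) s' /\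
                 k + 22 * size (push_block Y rest) <= 22 * (size rest).+1 + 13).
Proof.
elim: rest Y s => [|Z rest IH] Y [pc ir im rr rm]
  [-> [H0 H1 H2 H5 H7] [H6 H4 Hinp Hie Hle] [Hfr Hstk Hirf]].
  dstep 11; have -> : ir 6 <= ir 7 by rewrite H6 H7 /=; lia.
  by apply: reach_now; split; last by rewrite /=; lia.
dstep 11; have -> : ir 6 <= ir 7 = false by rewrite H6 H7 /=; lia.
dstep 12. dstep 13. dstep 14. dstep 15. dstep 16. dstep 17. dstep 18. dstep 19.
dstep 20. dstep 21. dstep 22.
have [/blocks_mem_pop [Hrest [SZ1 SZ2 SZ3]] [SY1 SY2 SY3]] := blocks_mem_pop Hstk.
have EY : ir 6 - ir 2 = base + 2 * (size rest).+1 by rewrite H6 H2 /=; lia.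
have EZ : base + 2 * (size rest).+1 - 2 = base + 2 * size rest by lia.
rewrite /upd /= EY H2 H1 EZ !addn1 SZ1 SZ2 SY1 SY2 -/(rho Z) -/(rho Y).
case: ifP => Hr; last first.
  dstep 23; apply: reach_now; rewrite /upd /=; split; last by lia.
  by split=> //; split=> // r Hr0; simpif; apply: Hirf.
dstep 24. dstep 25. dstep 26. dstep 27. dstep 28. dstep 29. dstep 30. dstep 31.
dstep 32. dstep 33.
apply: (reachW (IH (Z ++ Y) _ _)) => [|k s [Hd Hk]]; last by split => //; lia.
rewrite /upd /=; split; [done | by split | by split => //; rewrite EY | split].
- by move=> x Hx; simpif; apply: Hfr.
- apply: (blocks_mem_push Hrest) => [|x Hx]; last by simpif.
  by split; simpif; rewrite ?psum_cat ?wsum_cat ?SZ3 ?SY3 ?size_cat.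
- by move=> r Hr0; simpif; apply: Hirf.
Qed.

Lemma decomp_run base iend rm0 im0 irf js st (s : state R) :
  decomp_inv o base iend rm0 im0 irf js st s ->
  reach P s (fun k s' =>
    decomp_inv (34 + o) base iend rm0 im0 irf [::] (foldl (@push_job R) st js) s' /\
    k + 22 * size (foldl (@push_job R) st js) <= 46 * size js + 22 * size st + 1).
Proof.
elim: js st s => [|j js IH] st [pc ir im rr rm]
  [-> [H0 H1 H2 H5 H7] [H6 H4 Hinp Hie Hle] [Hfr Hstk Hirf]].
  dstep 0; rewrite H4 H0 eqxx.
  by apply: reach_now; split; last by rewrite /=; lia.
dstep 0; rewrite H4 H0 /=.
dstep 1. dstep 2. dstep 3. dstep 4. dstep 5. dstep 6. dstep 7. dstep 8. dstep 9.
dstep 10.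
have [I1 I2] := Hinp 0 erefl; rewrite addn0 /= in I1 I2.
have [F1 _] := Hfr (ir 3) ltac:(rewrite /= in Hie; lia).
have [F2 _] := Hfr (ir 3).+1 ltac:(rewrite /= in Hie; lia).
apply: (reach_seq (push_block_run (base := base) (iend := iend) (rm0 := rm0)
  (im0 := im0) (irf := irf) (js := js) (rest := st) (Y := [:: j]) _)).
  rewrite /upd /= H1 H2 H4 H6 !addn1 F1 F2 I1 I2.
  split; [done | by split | split => //=; try lia | split].
  - by have := input_mem_behead Hinp; rewrite !addn1.
  - by rewrite /= in Hie; lia.
  - by move=> x Hx; simpif; apply: Hfr.
  - apply: (blocks_mem_push Hstk) => [|x Hx]; last by simpif.
    by split; simpif; rewrite ?psum_cons ?wsum_cons ?psum0 ?wsum0 ?addr0.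
  - by move=> r Hr0; simpif; apply: Hirf.
move=> k1 s1 [Hd Hk1].
apply: (reachW (IH _ _ Hd)) => k2 s2 [Hd2 Hk2]; split => //.
by have := size_push_block [:: j] st; rewrite /= /push_job in Hk2 Hk1 *; lia.
Qed.

End DecompPhase.

Section MergePhase.
Variable R : realType.
Variables (baseA topA topB : nat) (xs ys : seq (seq (job R))).
Hypothesis topA_def : topA = baseA + 2 * size xs.
Hypothesis topB_def : topB = topA + 2 * size ys.

Definition output_mem (pre : seq bool) (im : nat -> nat) :=
  forall t, 2 + t < baseA -> (im (2 + t) != 0) = nth false pre t.

Definition output_room i j (pre : seq bool) :=
  2 + size pre + size (flatten (drop i xs)) + size (flatten (drop j ys)) <= baseA.

Definition merge_inv (pc0 : nat) (i j : nat) (pre : seq bool) (s : state R) :=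
  let: State pc ir im rr rm := s in
  [/\ pc = pc0,
      [/\ ir 0 = 0, ir 1 = 1, ir 2 = 2, ir 17 = topA & ir 6 = topB],
      [/\ ir 18 = baseA + 2 * i, ir 20 = topA + 2 * j, ir 21 = 2 + size pre,
          i <= size xs & j <= size ys] &
      [/\ blocks_mem baseA xs im rm, blocks_mem topA ys im rm & output_mem pre im] ].

Lemma blocks_mem_upd base (bs : seq (seq (job R))) im rm a v :
  blocks_mem base bs im rm -> a < base -> blocks_mem base bs (upd im a v) rm.
Proof. by move=> H Ha; apply: blocks_mem_frame H _ => x Hx; rewrite upd_neq //; lia. Qed.

Lemma output_mem_cat_false pre c im : output_mem pre im -> output_mem (pre ++ nseq c false) im.
Proof.
move=> H t Ht; rewrite H // nth_cat nth_nseq if_same.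
by case: ltnP => // Hge; rewrite nth_default.
Qed.

Lemma output_mem_rcons_true pre im : output_mem pre im -> 2 + size pre < baseA ->
  output_mem (pre ++ [:: true]) (upd im (2 + size pre) 1).
Proof.
move=> H Hs t Ht; rewrite nth_cat /upd.
case: (ltngtP t (size pre)) => Htp; last by rewrite Htp subnn eqxx.
  by rewrite ifN_eq ?H //; lia.
rewrite ifN_eq ?H; try lia.
by rewrite !nth_default //=; lia.
Qed.

Lemma write_ones_run c i j pre (s : state R) : merge_inv 101 i j pre s -> Defs.ir s 24 = c ->
  2 + size pre + c <= baseA ->
  reach sched_prog s (fun k s' => merge_inv 106 i j (pre ++ nseq c true) s' /\ k = 5 * c + 1).
Proof.
elim: c pre s => [|c IH] pre [pc ir im rr rm]
  [-> [H0 H1 H2 H17 H6] [H18 H20 H21 Hi Hj] [HA HB Ho]] /= H24 Hb.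
  mstep 101; rewrite H24 H0 eqxx.
  by apply: reach_now; rewrite cats0.
mstep 101; rewrite H24 H0 /=.
mstep 102. mstep 103. mstep 104. mstep 105.
apply: (reachW (IH (pre ++ [:: true]) _ _ _ _)).
- rewrite {1 2 3}/upd /= H21 H1 H0 H2 H17 H6 H18 H20 size_cat /=; split => //.
  split; [apply: blocks_mem_upd => //; lia.. | apply: output_mem_rcons_true => //; lia].
- rewrite /upd /= H24 H1; lia.
- by rewrite size_cat /=; lia.
- by move=> k s' [Hm Hk]; move: Hm; rewrite -catA /= => Hm; split => //; lia.
Qed.

Lemma emit_left_block i j pre (s : state R) : merge_inv 100 i j pre s -> i < size xs ->
  2 + size pre + size (nth [::] xs i) <= baseA ->
  reach sched_prog s (fun k s' =>
    merge_inv 86 i.+1 j (pre ++ nseq (size (nth [::] xs i)) true) s' /\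
    k = 5 * size (nth [::] xs i) + 4).
Proof.
case: s => pc ir im rr rm [-> [H0 H1 H2 H17 H6] [H18 H20 H21 Hi Hj] [HA HB Ho]] Hix Hb.
mstep 100; have [_ _ HAi] := HA i Hix.
apply: (reach_seq (write_ones_run (c := size (nth [::] xs i)) (i := i) (j := j)
  (pre := pre) _ _ Hb)).
- by rewrite /upd /=; split.
- by rewrite /upd /= H18 HAi.
move=> k1 [pc1 ir1 im1 rr1 rm1] [[-> [G0 G1 G2 G17 G6] [G18 G20 G21 Gi Gj] [GA GB Go]] Hk1].
mstep 106. mstep 107.
apply: reach_now; split; last by lia.
by rewrite /upd /=; split => //; split => //; rewrite ?G18; lia.
Qed.

Lemma emit_right_block i j pre (s : state R) : merge_inv 108 i j pre s -> j < size ys ->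
  reach sched_prog s (fun k s' =>
    merge_inv 86 i j.+1 (pre ++ nseq (size (nth [::] ys j)) false) s' /\ k = 4).
Proof.
case: s => pc ir im rr rm [-> [H0 H1 H2 H17 H6] [H18 H20 H21 Hi Hj] [HA HB Ho]] Hjy.
mstep 108. mstep 109. mstep 110. mstep 111.
have [_ _ HBj] := HB j Hjy.
apply: reach_now; split => //; rewrite /upd /=; split => //.
  by split => //; rewrite ?H20 ?H21 ?H2 ?HBj ?size_cat ?size_nseq; lia.
by split => //; apply: output_mem_cat_false.
Qed.

Lemma size_flatten_drop (bs : seq (seq (job R))) i : i < size bs ->
  size (flatten (drop i bs)) = size (nth [::] bs i) + size (flatten (drop i.+1 bs)).
Proof. by move=> H; rewrite (drop_nth [::] H) /= size_cat. Qed.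

Definition merge_done i j pre k (s : state R) := halted sched_prog s /\
  exists so, ratio_merge (drop i xs) (drop j ys) so /\ output_mem (pre ++ so) (Defs.im s) /\
    k <= 16 * (size xs - i + (size ys - j)) + 5 * size (flatten (drop i xs)) + 2.

Lemma merge_doneW i j pre k k' s : k' <= k -> merge_done i j pre k s ->
  merge_done i j pre k' s.
Proof. by move=> Hk [Hh [so [HM [Ho Hk']]]]; split=> //; exists so; do 2!split=> //; lia. Qed.

Definition merge_correct_after i j := forall i' j' pre' (s' : state R),
  size xs - i' + (size ys - j') < size xs - i + (size ys - j) ->
  merge_inv 86 i' j' pre' s' -> output_room i' j' pre' ->
  reach sched_prog s' (merge_done i' j' pre').

(* The loop body spends at most 12 steps before emitting a block. *)
Lemma emit_left_then i j pre (s : state R) : merge_inv 100 i j pre s -> i < size xs ->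
  (forall Y ys', drop j ys = Y :: ys' -> rho Y <= rho (nth [::] xs i))%R ->
  output_room i j pre -> merge_correct_after i j ->
  reach sched_prog s (fun k s' => merge_done i j pre (k + 12) s').
Proof.
move=> Hinv Hix Hhead Hb Hrest; have HsX := size_flatten_drop Hix.
apply: (reach_seq (emit_left_block Hinv Hix _)); first by rewrite /output_room in Hb; lia.
move=> k1 s1 [Hm1 ->].
have Hroom : output_room i.+1 j (pre ++ nseq (size (nth [::] xs i)) true).
  by rewrite /output_room size_cat size_nseq; rewrite /output_room in Hb; lia.
apply: (reachW (Hrest i.+1 j _ s1 ltac:(lia) Hm1 Hroom)) => k2 s2 [Hh [so [HM [Ho Hk]]]].
split=> //; exists (nseq (size (nth [::] xs i)) true ++ so); split.
  by rewrite (drop_nth [::] Hix); apply: RatioMergeL.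
by rewrite catA; split=> //; lia.
Qed.

Lemma emit_right_then i j pre (s : state R) : merge_inv 108 i j pre s -> j < size ys ->
  (forall X xs', drop i xs = X :: xs' -> rho X < rho (nth [::] ys j))%R ->
  output_room i j pre -> merge_correct_after i j ->
  reach sched_prog s (fun k s' => merge_done i j pre (k + 12) s').
Proof.
move=> Hinv Hjy Hhead Hb Hrest; have HsY := size_flatten_drop Hjy.
apply: (reach_seq (emit_right_block Hinv Hjy)) => k1 s1 [Hm1 ->].
have Hroom : output_room i j.+1 (pre ++ nseq (size (nth [::] ys j)) false).
  by rewrite /output_room size_cat size_nseq; rewrite /output_room in Hb; lia.
apply: (reachW (Hrest i j.+1 _ s1 ltac:(lia) Hm1 Hroom)) => k2 s2 [Hh [so [HM [Ho Hk]]]].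
split=> //; exists (nseq (size (nth [::] ys j)) false ++ so); split.
  by rewrite (drop_nth [::] Hjy); apply: RatioMergeR.
by rewrite catA; split=> //; lia.
Qed.

Lemma merge_halt pre (s : state R) : merge_inv 86 (size xs) (size ys) pre s ->
  reach sched_prog s (merge_done (size xs) (size ys) pre).
Proof.
case: s => pc ir im rr rm [-> [H0 H1 H2 H17 H6] [H18 H20 H21 Hi Hj] [HA HB Ho]].
mstep 86; rewrite H18 H17 ifT; last by apply/eqP; lia.
mstep 98; rewrite H20 H6 ifT; last by apply/eqP; lia.
apply: reach_now; split => //; exists [::]; rewrite !drop_size cats0.
by split; [exact: RatioMerge0 | split => //; lia].
Qed.

Lemma merge_compare_step i j pre ir im rr rm :
  merge_inv 86 i j pre (State 86 ir im rr rm) -> i < size xs -> j < size ys ->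
  output_room i j pre -> merge_correct_after i j ->
  reach sched_prog (State 86 ir im rr rm) (merge_done i j pre).
Proof.
move=> Hinv Hix Hjy Hb Hcont.
have [_ [H0 H1 H2 H17 H6] [H18 H20 H21 Hi Hj] [HA HB Ho]] := Hinv.
mstep 86; rewrite H18 H17 ifN_eq; last by lia.
mstep 87; rewrite H20 H6 ifN_eq; last by lia.
have [HX1 HX2 _] := HA i Hix; have [HY1 HY2 _] := HB j Hjy.
mstep 88. mstep 89. mstep 90. mstep 91. mstep 92. mstep 93. mstep 94. mstep 95.
mstep 96.
rewrite /upd /= H18 H20 H1 !addn1 HX1 HX2 HY1 HY2.
rewrite -/(rho (nth [::] xs i)) -/(rho (nth [::] ys j)); case: ifP => Hcmp.
  apply: (reachW (emit_left_then (i := i) (j := j) (pre := pre) _ Hix _ Hb Hcont)).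
  - by split.
  - by rewrite (drop_nth [::] Hjy) => Y ys' [<- _].
  - by move=> k s' /merge_doneW; apply; lia.
mstep 97.
apply: (reachW (emit_right_then (i := i) (j := j) (pre := pre) _ Hjy _ Hb Hcont)).
- by split.
- by rewrite (drop_nth [::] Hix) => X xs' [<- _]; rewrite ltNge Hcmp.
- by move=> k s' /merge_doneW; apply; lia.
Qed.

Lemma merge_run N i j pre (s : state R) :
  size xs - i + (size ys - j) <= N -> merge_inv 86 i j pre s -> output_room i j pre ->
  reach sched_prog s (merge_done i j pre).
Proof.
elim: N i j pre s => [|N IH] i j pre [pc ir im rr rm] HN Hinv Hb;
  have [Hpc [H0 H1 H2 H17 H6] [H18 H20 H21 Hi Hj] [HA HB Ho]] := Hinv.
  have Ei : i = size xs by lia.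
  have Ej : j = size ys by lia.
  by rewrite Ei Ej in Hinv *; apply: merge_halt.
have Hcont : merge_correct_after i j.
  by move=> i' j' pre' s' Hlt Hinv' Hb'; apply: IH Hinv' Hb'; lia.
rewrite {}Hpc in Hinv *.
case: (ltnP i (size xs)) => Hix; case: (ltnP j (size ys)) => Hjy.
- exact: merge_compare_step.
- mstep 86; rewrite H18 H17 ifN_eq; last by lia.
  mstep 87; rewrite H20 H6 ifT; last by apply/eqP; lia.
  apply: (reachW (emit_left_then (i := i) (j := j) (pre := pre) _ Hix _ Hb Hcont)).
  + by split.
  + by rewrite (_ : j = size ys) ?drop_size //; lia.
  + by move=> k s' /merge_doneW; apply; lia.
- mstep 86; rewrite H18 H17 ifT; last by apply/eqP; lia.
  mstep 98; rewrite H20 H6 ifN_eq; last by lia.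
  mstep 99.
  apply: (reachW (emit_right_then (i := i) (j := j) (pre := pre) _ Hjy _ Hb Hcont)).
  + by split.
  + by rewrite (_ : i = size xs) ?drop_size //; lia.
  + by move=> k s' /merge_doneW; apply; lia.
- have Ei : i = size xs by lia.
  have Ej : j = size ys by lia.
  by rewrite Ei Ej in Hinv *; apply: merge_halt.
Qed.

End MergePhase.

Lemma code_at_11 i : i < 34 -> nth Halt sched_prog (i + 11) = nth Halt (decomp_code 11) i.
Proof.
move=> Hi; rewrite /sched_prog nth_cat (_ : size prelude_code = 11) // ifN; last by lia.
by rewrite addnK nth_cat (_ : size (decomp_code 11) = 34) // Hi.
Qed.

Lemma code_at_49 i : i < 34 -> nth Halt sched_prog (i + 49) = nth Halt (decomp_code 49) i.
Proof.
move=> Hi; rewrite /sched_prog nth_cat (_ : size prelude_code = 11) // ifN; last by lia.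
rewrite nth_cat (_ : size (decomp_code 11) = 34) // ifN; last by lia.
rewrite nth_cat (_ : size switch_code = 4) // ifN; last by lia.
rewrite (_ : i + 49 - 11 - 34 - 4 = i); last by lia.
by rewrite nth_cat (_ : size (decomp_code 49) = 34) // Hi.
Qed.

Section Input.
Variable R : realType.
Implicit Types (A B L : seq (job R)).

Lemma input_mem_encoding L : input_mem 0 L (nth 0%R (flatten [seq [:: j.1; j.2] | j <- L])).
Proof.
move=> i; rewrite add0n; elim: L i => [|x L IH] [|i] // Hi.
have -> : 2 * i.+1 = (2 * i).+2 by lia.
exact: IH.
Qed.

Lemma input_mem_catl inp A B rm : input_mem inp (A ++ B) rm -> input_mem inp A rm.
Proof.
move=> H i Hi; have := H i; rewrite size_cat nth_cat Hi; apply; lia.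
Qed.

Lemma input_mem_catr inp A B rm : input_mem inp (A ++ B) rm ->
  input_mem (inp + 2 * size A) B rm.
Proof.
move=> H i Hi; have -> : inp + 2 * size A + 2 * i = inp + 2 * (size A + i) by lia.
have := H (size A + i) ltac:(rewrite size_cat; lia).
by rewrite nth_cat ltnNge leq_addr addKn.
Qed.

Lemma input_mem_frame inp js rm rm' : input_mem inp js rm ->
  (forall x, x < inp + 2 * size js -> rm' x = rm x) -> input_mem (R := R) inp js rm'.
Proof. by move=> H Fr i Hi; rewrite !Fr; [apply: H | lia..]. Qed.

End Input.

Section Main.
Variable R : realType.
Variables A B : seq (job R).
Local Notation n := (size A + size B).
Local Notation stA := (foldl (@push_job R) [::] A).
Local Notation stB := (foldl (@push_job R) [::] B).
Local Notation baseA := (2 * n + 2).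
Local Notation topA := (baseA + 2 * size stA).

Lemma decomp_phases : reach sched_prog (init_state A B) (fun k s =>
  let: State pc ir im rr rm := s in
  [/\ pc = 83, [/\ ir 0 = 0, ir 1 = 1 & ir 2 = 2],
      [/\ ir 19 = baseA, ir 17 = topA & ir 6 = topA + 2 * size stB],
      [/\ blocks_mem baseA (rev stA) im rm, blocks_mem topA (rev stB) im rm
        & forall t, 2 + t < baseA -> im (2 + t) = 0]
    & k + 22 * (size stA + size stB) <= 46 * n + 17]).
Proof.
rewrite /init_state.
mstep 0. mstep 1. mstep 2. mstep 3. mstep 4. mstep 5. mstep 6. mstep 7. mstep 8. mstep 9.
mstep 10.
rewrite /upd /=.
set rmI := [eta nth 0%R _].
set imI := fun i : nat => if i == 0 then _ else _.
have HinpAB : input_mem 0 (A ++ B) rmI := input_mem_encoding (L := A ++ B).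
apply: (reach_seq (decomp_run code_at_11 (base := baseA) (iend := 2 * size A) (rm0 := rmI)
   (im0 := imI) (js := A) (st := [::]) _)).
  by split => //=; split => //; try lia; apply: input_mem_catl HinpAB.
move=> k1 [pc2 ir2 im2 rr2 rm2] [[-> [G0 G1 G2 G5 G7] [G6 G4 Ginp Gie Gle] [Gfr Gstk Girf]] Hk1].
mstep 45. mstep 46. mstep 47. mstep 48.
rewrite /upd /= in Gie G6 *.
have HinpB : input_mem (2 * size A) B rm2.
  apply: input_mem_frame (input_mem_catr HinpAB) _ => x Hx.
  by have [] := Gfr x ltac:(lia).
have G3 : ir2 3 = 2 * size A by lia.
have G15 : ir2 15 = size B by rewrite Girf.
apply: (reach_seq (decomp_run code_at_49 (base := topA) (iend := 2 * n)
   (rm0 := rm2) (im0 := im2) (js := B) (st := [::]) _)).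
  by split => //=; split => //; rewrite ?G6 ?G0 ?G1 ?G2 ?G3 ?G15 //; lia.
move=> k2 [pc3 ir3 im3 rr3 rm3] [[-> [J0 J1 J2 J5 J7] [J6 J4 Jinp Jie Jle] [Jfr Jstk Jirf]] Hk2].
apply: reach_now; split => //.
- split; [by rewrite Jirf //= Girf //=; lia | by rewrite Jirf //= G6 G0; lia | done].
- split=> //.
    by apply: blocks_mem_frame Gstk _ => x Hx; apply: Jfr; rewrite size_rev in Hx; lia.
  move=> t Ht; have [_ ->] := Jfr (2 + t) ltac:(lia).
  by have [_ ->] := Gfr (2 + t) ltac:(lia).
- by rewrite /= in Hk1 Hk2; lia.
Qed.

Lemma sched_prog_correct : reach sched_prog (init_state A B) (fun k s =>
  [/\ halted sched_prog s, k <= 67 * n + 22 &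
      exists so, ratio_merge (ratio_decomp A) (ratio_decomp B) so /\
                 output_mem baseA so (Defs.im s)]).
Proof.
apply: (reach_seq decomp_phases)
  => k1 [pc ir im rr rm] [-> [H0 H1 H2] [H19 H17 H6] [HA HB Hout] Hk1].
mstep 83. mstep 84. mstep 85.
have SA := size_foldl_push_job [::] A; have SB := size_foldl_push_job [::] B.
have FA := flatten_ratio_decomp A; have FB := flatten_ratio_decomp B.
rewrite /ratio_decomp in FA FB.
apply: (reachW (@merge_run R baseA topA (topA + 2 * size stB) (rev stA) (rev stB) _ _
   (size stA + size stB) 0 0 [::] _ _ _ _)).
- by rewrite size_rev.
- by rewrite size_rev.
- by rewrite !size_rev !subn0.
- rewrite /upd /=; split => //; first by split => //; lia.
  by split => // t Ht; rewrite Hout // nth_nil.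
- by rewrite /output_room !drop0 FA FB /=; lia.
move=> k s [Hh [so [HM [Ho Hk]]]]; split => //.
  by rewrite !subn0 !drop0 FA !size_rev /= in Hk Hk1; lia.
by exists so; rewrite !drop0 in HM.
Qed.

End Main.

Lemma output_of_output_mem (R : realType) (A B : seq (job R)) (s : state R) so :
  size so = size A + size B -> output_mem (2 * (size A + size B) + 2) so (Defs.im s) ->
  output A B s = so.
Proof.
move=> Hs Ho; apply: (@eq_from_nth _ false); first by rewrite size_map size_iota.
move=> t; rewrite size_map size_iota => Ht.
by rewrite (nth_map 0) ?size_iota // nth_iota // add0n; apply: Ho; lia.
Qed.

Local Open Scope ring_scope.

Theorem lemma2 :
  exists (P : program) (c : nat),
    forall (R : realType) (A B : seq (job R)),
      valid_instance A B ->
      let fin := run P (c * (size A + size B) + c)%N (init_state A B) in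
      halted P fin /\ optimal_interleaving A B (output A B fin).
Proof.
exists sched_prog, 100%N => R A B Hv fin.
have [k [Hh Hk [so [HM Ho]]]] := sched_prog_correct A B.
have -> : fin = run sched_prog k (init_state A B).
  rewrite /fin -(subnKC (_ : k <= 100 * (size A + size B) + 100)%N); last by lia.
  by rewrite run_add run_halted.
have [C1 C2] := ratio_merge_count HM; rewrite !flatten_ratio_decomp in C1 C2.
rewrite (output_of_output_mem _ Ho); last by rewrite -(count_predC id) C1 -C2.
split=> //; apply: ratio_merge_decomp_optimal HM.
- by move=> j Hj; case: (Hv j) => //; rewrite mem_cat Hj.
- by move=> j Hj; case: (Hv j) => //; rewrite mem_cat Hj orbT.
Qed.
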